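(* There is a constant $C$ such that for every $n$ and every integer $D\ge 2$ there exists a $[D,2D]$-preserving distance labeling scheme for the family $\mathcal G_n$ of unweighted graphs on $n$ nodes with maximum label size at most $C\cdot\frac{n}{D}\log^2 D$; i.e., of size $O\!\left(\frac{n}{D}\log^2 D\right)$.
   Context: A $[D,2D]$-preserving distance labeling scheme for a family $\mathcal G$ of graphs consists of, for each $G\in\mathcal G$, a map $e_G:V(G)\to\{0,1\}^*$ (labels), and a single decoder $d$ (not depending on $G$) such that for every $G\in\mathcal G$: (1) $d(e_G(u),e_G(v))\ge dist_G(u,v)$ for all $u,v\in V(G)$; (2) $d(e_G(u),e_G(v))=dist_G(u,v)$ for all $u,v\in V(G)$ with $dist_G(u,v)\in[D,2D]$. Here $dist_G$ is shortest-path distance (number of edges), and the maximum label size is $\max|e_G(u)|$ over all $G\in\mathcal G$, $u\in V(G)$. $\log$ is the natural logarithm. Graphs are unweighted; the paper states the result for both undirected and directed graphs (for directed graphs $dist_G$ is directed distance). *)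

From Stdlib Require Import Reals.
From mathcomp Require Import all_boot.
Set Implicit Arguments. Unset Strict Implicit. Unset Printing Implicit Defensive.

(* A (directed, unweighted) graph on the vertex set 'I_n is an edge relation
   G : rel 'I_n ; undirected graphs are the symmetric ones. *)

Definition walk (n : nat) (G : rel 'I_n) (u v : 'I_n) (k : nat) : Prop :=
  exists p : seq 'I_n, [/\ size p = k, path G u p & last u p = v].

Definition dist_is (n : nat) (G : rel 'I_n) (u v : 'I_n) (k : nat) : Prop :=
  walk G u v k /\ (forall k', k' < k -> ~ walk G u v k').

(* dist_G(u,v) <= x, where x : option nat and None encodes +infinity *)
Definition dist_le (n : nat) (G : rel 'I_n) (u v : 'I_n) (x : option nat) : Prop :=
  match x with
  | None => True
  | Some m => exists k, k <= m /\ walk G u v k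
  end.

Definition DD_preserving_scheme (n D : nat)
    (e : rel 'I_n -> 'I_n -> seq bool)
    (d : seq bool -> seq bool -> option nat) : Prop :=
  forall G : rel 'I_n,
    (forall u v, dist_le G u v (d (e G u) (e G v))) /\
    (forall u v k, dist_is G u v k -> D <= k <= 2 * D ->
        d (e G u) (e G v) = Some k).

(* Capping distances at 2D, a pair (u, v) at distance k in [D, 2D] has at least D + 1 vertices
   on its shortest paths. A greedy choice of O((n/D) log D) seed vertices therefore hits the
   shortest paths of all but (n/D)^2 such pairs, and the at most n/D vertices that are the source
   of more than n/D missed pairs become landmarks as well. A label stores the capped distances to
   and from all landmarks (O(log D) bits each) together with the missed pairs of its vertex, an
   (n/D)-subset of an (n(D+1))-set, i.e. O((n/D) log D) bits. The decoder returns the least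
   candidate distance; every candidate is the length of an actual walk, and the true distance
   is always a candidate. *)

From Stdlib Require Import Reals Lra.
From mathcomp Require Import all_boot zify.
Set Implicit Arguments. Unset Strict Implicit. Unset Printing Implicit Defensive.

Section Walks.
Variables (n : nat) (G : rel 'I_n).

Definition walkb (u v : 'I_n) (k : nat) : bool :=
  [exists p : k.-tuple 'I_n, path G u p && (last u p == v)].

Lemma walkP u v k : reflect (walk G u v k) (walkb u v k).
Proof.
apply: (iffP existsP) => [[p /andP[hp /eqP hl]] | [p [hs hp hl]]].
  by exists (val p); rewrite size_tuple.
have hs' : size p == k by rewrite hs.
by exists (Tuple hs'); rewrite /= hp hl eqxx.
Qed.

Lemma walk_refl u : walk G u u 0.
Proof. by exists [::]. Qed.

Lemma walk_cat u w v a b : walk G u w a -> walk G w v b -> walk G u v (a + b).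
Proof.
move=> [p [hs hp hl]] [q [hs' hq hl']]; exists (p ++ q).
by rewrite size_cat cat_path last_cat hs hs' hp hl hq hl'.
Qed.

Lemma walk_split u v k j : walk G u v k -> j <= k ->
  exists w, walk G u w j /\ walk G w v (k - j).
Proof.
move=> [p [hs hp hl]] hj; move: hp; rewrite -(cat_take_drop j p) cat_path => /andP[hp1 hp2].
exists (last u (take j p)); split.
  by exists (take j p); split => //; rewrite size_take hs; case: ltngtP hj.
by exists (drop j p); split; rewrite ?size_drop ?hs // -last_cat cat_take_drop.
Qed.

Lemma walk_shorten u v k : walk G u v k -> exists2 k', k' < n & walk G u v k'.
Proof.
move=> [p [hs hp hl]]; case: (shortenP hp) hl => p' hp' hu _ hl.
exists (size p'); last by exists p'.
by have := max_card (mem (u :: p')); rewrite (card_uniqP hu) card_ord.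
Qed.

Section CappedDistance.
Variable D : nat.

(* [cdist u v] is the distance from [u] to [v] if it is at most [2 D], and [2 D + 1] otherwise. *)
Definition cdist (u v : 'I_n) : nat := find (walkb u v) (iota 0 (2 * D).+1).

Lemma cdist_le u v : cdist u v <= (2 * D).+1.
Proof. by rewrite /cdist -{2}(size_iota 0 (2 * D).+1) find_size. Qed.

Lemma cdist_walk u v : cdist u v <= 2 * D -> walk G u v (cdist u v).
Proof.
move=> h; have hh : has (walkb u v) (iota 0 (2 * D).+1) by rewrite has_find size_iota.
by have := nth_find 0 hh; rewrite nth_iota // add0n => /walkP.
Qed.

Lemma cdist_min u v k : walk G u v k -> k <= 2 * D -> cdist u v <= k.
Proof.
move=> hw hk; rewrite leqNgt; apply/negP => hlt.
have := before_find 0 hlt; rewrite nth_iota // add0n => /negbT/negP; apply.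
exact/walkP.
Qed.

Lemma cdist_dist u v k : dist_is G u v k -> k <= 2 * D -> cdist u v = k.
Proof.
move=> [hw hn] hk; have h1 := cdist_min hw hk.
apply/eqP; rewrite eqn_leq h1 /= leqNgt; apply/negP => hlt.
by apply: (hn _ hlt); apply: cdist_walk; apply: leq_trans h1 hk.
Qed.

Lemma cdist_refl u : cdist u u = 0.
Proof. by apply/eqP; rewrite -leqn0; apply: cdist_min (walk_refl u) _. Qed.

Lemma cdist_split u v j : cdist u v <= 2 * D -> j <= cdist u v ->
  exists w, cdist u w = j /\ cdist w v = cdist u v - j.
Proof.
move=> hk hj; have [w [h1 h2]] := walk_split (cdist_walk hk) hj; exists w.
have c1 : cdist u w <= j by apply: cdist_min h1 (leq_trans hj hk).
have c2 : cdist w v <= cdist u v - j.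
  by apply: cdist_min h2 (leq_trans (leq_subr _ _) hk).
have w1 := cdist_walk (leq_trans c1 (leq_trans hj hk)).
have w2 := cdist_walk (leq_trans c2 (leq_trans (leq_subr _ _) hk)).
have c3 : cdist u v <= cdist u w + cdist w v.
  by apply: cdist_min (walk_cat w1 w2) _; lia.
by split; lia.
Qed.

Definition geodesic_set (u v : 'I_n) : {set 'I_n} :=
  [set s | cdist u s + cdist s v == cdist u v].

Lemma card_geodesic_set u v : cdist u v <= 2 * D -> (cdist u v).+1 <= #|geodesic_set u v|.
Proof.
move=> hk; pose g (j : 'I_(cdist u v).+1) : 'I_n :=
  odflt u [pick s in geodesic_set u v | cdist u s == j].
have gP j : cdist u (g j) = j /\ g j \in geodesic_set u v.
  rewrite /g; case: pickP => [s /andP[hs /eqP hj] | hno] //=.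
  have [s [h1 h2]] := cdist_split hk (ltnSE (ltn_ord j)).
  move: (hno s); rewrite inE h1 h2 eqxx subnKC ?eqxx //; exact: ltnSE (ltn_ord j).
have ginj : injective g.
  by move=> i j hij; apply: val_inj; rewrite /= -(proj1 (gP i)) hij (proj1 (gP j)).
rewrite -{1}(card_ord (cdist u v).+1) -(card_imset (mem 'I_(cdist u v).+1) ginj).
by apply: subset_leq_card; apply/subsetP => x /imsetP[j _ ->]; case: (gP j).
Qed.

End CappedDistance.
End Walks.

Lemma card_sum_mem (T : finType) (X : {set T}) : #|X| = \sum_(x : T) (x \in X).
Proof. by rewrite -sum1_card big_mkcond /=; apply: eq_bigr => x _; case: (x \in X). Qed.

Section GreedyHitting.
Variables (T P : finType) (t0 : T) (h : P -> {set T}) (L : nat) (A : {set P}).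
Hypothesis card_h : forall p, p \in A -> L <= #|h p|.

Definition missed (S : seq T) : {set P} := [set p in A | [disjoint h p & S]].

Lemma exists_frequent_point (U : {set P}) : U \subset A ->
  exists s, L * #|U| <= #|T| * #|U :&: [set p | s \in h p]|.
Proof.
move=> sUA; pose f s := #|U :&: [set p | s \in h p]|.
have double_count : \sum_(s : T) f s = \sum_(p in U) #|h p|.
  rewrite /f; under eq_bigr => s _ do rewrite card_sum_mem.
  under [RHS]eq_bigr => p _ do rewrite card_sum_mem.
  rewrite exchange_big /= [RHS]big_mkcond /=; apply: eq_bigr => p _.
  rewrite (eq_bigr (fun s => (p \in U) && (s \in h p) : nat)); last by move=> s _; rewrite !inE.
  by case: (p \in U) => //=; rewrite big1.
have sum_h : L * #|U| <= \sum_(p in U) #|h p|.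
  rewrite -sum1_card big_distrr /= muln1; apply: leq_sum => p hp.
  exact/card_h/(subsetP sUA).
exists [arg max_(s > t0) f s]; case: arg_maxnP => // s _ hs.
apply: leq_trans sum_h _; rewrite -double_count.
apply: (@leq_trans (\sum_(i : T) f s)); first by apply: leq_sum => i _; apply: hs.
by rewrite sum_nat_const.
Qed.

Lemma greedy_hitting_seq t : exists S : seq T, size S = t /\
  #|T| ^ t * #|missed S| <= (#|T| - L) ^ t * #|A|.
Proof.
elim: t => [|t [S [hs hb]]].
  exists [::]; split => //; rewrite !expn0 !mul1n; apply: subset_leq_card.
  by apply/subsetP => p; rewrite inE => /andP[].
have sUA : missed S \subset A by apply/subsetP => p; rewrite inE => /andP[].
have [s hs'] := exists_frequent_point sUA.
exists (s :: S); split; first by rewrite /= hs.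
have -> : missed (s :: S) = missed S :\: [set p | s \in h p].
  apply/setP => p; rewrite !inE disjoint_sym disjoint_cons disjoint_sym.
  by case: (s \in h p); case: (p \in A); case: [disjoint h p & S].
have step : #|T| * #|missed S :\: [set p | s \in h p]| <= (#|T| - L) * #|missed S|.
  have := cardsID [set p | s \in h p] (missed S).
  move: hs'; set a := #|_ :&: _|; set b := #|_ :\: _|; set c := #|missed S| => h1 h2.
  by rewrite mulnBl -h2; move: h1; rewrite -h2; nia.
apply: (@leq_trans (#|T| ^ t * ((#|T| - L) * #|missed S|))).
  by rewrite expnS (mulnC #|T|) -mulnA leq_mul2l step orbT.
by rewrite mulnCA expnS -mulnA leq_mul2l hb orbT.
Qed.

End GreedyHitting.

Lemma leq_expn2r a b k : a <= b -> a ^ k <= b ^ k.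
Proof. by move=> h; elim: k => // k IH; rewrite !expnS leq_mul. Qed.

Lemma expn_subn_mul_le N L q : (N - L) ^ q * (N + q * L) <= N ^ q.+1.
Proof.
elim: q => [|q IH]; first by rewrite !expn0 !mul0n addn0 mul1n expn1.
have [->|hN] := posnP N; first by rewrite sub0n exp0n.
rewrite -(leq_pmul2r hN).
have h1 : (N - L) * (N + q.+1 * L) <= N * (N + q * L).
  have [hL|hL] := leqP L N; last by rewrite (_ : N - L = 0) ?mul0n //; lia.
  by move: (subnK hL); set a := N - L => ha; rewrite -ha; nia.
rewrite expnS [N ^ q.+2]expnS; set X := (N - L) ^ q; set Y := N ^ q.+1.
apply: (@leq_trans (X * (N * (N + q * L)) * N)).
  by have := leq_mul (leq_mul h1 (leqnn X)) (leqnn N); move: (N - L) => z; nia.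
by have := leq_mul (leq_mul IH (leqnn N)) (leqnn N); rewrite -/X -/Y; nia.
Qed.

Lemma expn_subn_half N L q : 0 < N -> N <= q * L -> 2 * (N - L) ^ q <= N ^ q.
Proof.
move=> hN hq; have := expn_subn_mul_le N L q; rewrite expnS => hb.
rewrite -(leq_pmul2r hN); move: hb; set x := (N - L) ^ q; set y := N ^ q => hb.
have : x * (2 * N) <= x * (N + q * L) by rewrite leq_mul2l mul2n -addnn leq_add2l hq orbT.
by nia.
Qed.

Lemma expn_subn_decay N L q j : 0 < N -> N <= q * L ->
  2 ^ j * (N - L) ^ (q * j) <= N ^ (q * j).
Proof.
move=> hN hq; elim: j => [|j IH]; first by rewrite muln0 !expn0.
rewrite mulnS !expnD expnS; have := expn_subn_half hN hq; move: IH.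
set a := 2 ^ j; set b := (N - L) ^ (q * j); set c := N ^ (q * j).
set x := (N - L) ^ q; set y := N ^ q => h1 h2.
by have := leq_mul h1 h2; nia.
Qed.

Lemma INR_expn a b : INR (a ^ b) = pow (INR a) b.
Proof. by elim: b => [|b IH]; rewrite ?expn0 // expnS mult_INR IH. Qed.

Lemma pow_exp x k : pow (exp x) k = exp (Rmult (INR k) x).
Proof.
elim: k => [|k IH]; first by rewrite /= Rmult_0_l exp_0.
change (pow (exp x) k.+1) with (Rmult (exp x) (pow (exp x) k)).
by rewrite IH -exp_plus S_INR; f_equal; ring.
Qed.

Lemma ln_le a b : Rlt 0 a -> Rle a b -> Rle (ln a) (ln b).
Proof. by move=> ha [hab|->]; [apply/Rlt_le/ln_increasing | apply: Rle_refl]. Qed.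

(* [(1 + b/a)^a <= e^b <= 3^b]. *)
Lemma expn_addr_le a b : (a + b) ^ a <= 3 ^ b * a ^ a.
Proof.
have [->|ha] := posnP a; first by rewrite !expn0 muln1 expn_gt0.
apply/leP; apply: INR_le; rewrite INR_expn mult_INR !INR_expn plus_INR.
have hA : Rlt 0 (INR a) by apply: lt_0_INR; apply/ltP.
have hB : Rle 0 (INR b) by apply: pos_INR.
have h1 : Rle (Rplus (INR a) (INR b)) (Rmult (INR a) (exp (Rdiv (INR b) (INR a)))).
  apply: Rle_trans (Rmult_le_compat_l _ _ _ (Rlt_le _ _ hA) (exp_ineq1_le _)).
  by right; field; lra.
apply: Rle_trans (pow_incr _ _ a (conj _ h1)) _; first lra.
rewrite Rpow_mult_distr pow_exp Rmult_comm.
apply: Rmult_le_compat_r; first by apply: pow_le; lra.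
have -> : Rmult (INR a) (Rdiv (INR b) (INR a)) = Rmult (INR b) 1 by field; lra.
rewrite -pow_exp; apply: pow_incr; split; first exact/Rlt_le/exp_pos.
by apply: Rle_trans exp_le_3 _; right; simpl; ring.
Qed.

Lemma card_small_sets (T : finType) m :
  #|[pred A : {set T} | #|A| <= m]| = \sum_(i < m.+1) 'C(#|T|, i).
Proof.
under eq_bigr => i _ do rewrite -card_draws.
rewrite -sum1_card (partition_big (fun A : {set T} => inord #|A| : 'I_m.+1) predT) //=.
apply: eq_bigr => i _; rewrite -sum1_card; apply: eq_bigl => A.
rewrite !inE; apply/andP/eqP => [[h /eqP <-]|h]; first by rewrite inordK.
split; first by rewrite h -ltnS ltn_ord.
by apply/eqP; apply: val_inj; rewrite /= h inordK.
Qed.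

(* Termwise comparison with the binomial expansion of [(N + m)^N]. *)
Lemma partial_binomial_mul_le N m : m <= N ->
  (\sum_(i < m.+1) 'C(N, i)) * (m ^ m * N ^ (N - m)) <= (N + m) ^ N.
Proof.
move=> hm; rewrite expnDn big_distrl /=.
rewrite (@big_ord_widen _ _ _ _ N.+1 (fun i => 'C(N, i) * (m ^ m * N ^ (N - m)))) ?ltnS //.
rewrite big_mkcond /=; apply: leq_sum => i _; case: ifP => // hi.
rewrite leq_mul2l; apply/orP; right; have hi' : i <= m by rewrite -ltnS.
have -> : m ^ m = m ^ i * m ^ (m - i) by rewrite -expnD subnKC.
have -> : N ^ (N - i) = N ^ (m - i) * N ^ (N - m) by rewrite -expnD; congr (_ ^ _); lia.
by rewrite [X in _ <= X]mulnC mulnA leq_mul2r leq_mul2l leq_expn2r ?orbT.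
Qed.

Lemma partial_binomial_le N m r : 0 < m -> m <= N -> N <= m * r ->
  \sum_(i < m.+1) 'C(N, i) <= (3 * r) ^ m.
Proof.
move=> hm hmN hN; have hN0 : 0 < N by apply: leq_trans hm hmN.
have := leq_trans (partial_binomial_mul_le hmN) (expn_addr_le N m).
have -> : N ^ N = N ^ m * N ^ (N - m) by rewrite -expnD subnKC.
have h4 : N ^ m <= m ^ m * r ^ m by rewrite -expnMn; apply: leq_expn2r.
have hp : 0 < N ^ (N - m) by rewrite expn_gt0 hN0.
have hpm : 0 < m ^ m by rewrite expn_gt0 hm.
rewrite expnMn; move: h4 hp hpm.
set S := \sum_(i < m.+1) _; set a := m ^ m; set b := N ^ (N - m); set c := N ^ m.
set d := r ^ m; set e := 3 ^ m => h4 hp hpm h.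
have h5 : S * a <= e * c by rewrite -(leq_pmul2r hp); rewrite !mulnA in h.
rewrite -(leq_pmul2r hpm); apply: leq_trans h5 _.
by rewrite -mulnA leq_mul2l (mulnC d) h4 orbT.
Qed.

Definition omin (s : seq nat) : option nat :=
  if s is x :: s' then Some (foldr minn x s') else None.

Lemma ominP s y : omin s = Some y -> y \in s /\ forall z, z \in s -> y <= z.
Proof.
case: s => [|x s] //= [<-]; elim: s => [|a s [IH1 IH2]] /=.
  by split; [rewrite mem_seq1 | move=> z; rewrite mem_seq1 => /eqP ->].
split.
  rewrite /minn; case: ifP => _; first by rewrite !inE eqxx orbT.
  by move: IH1; rewrite !inE; case/orP => ->; rewrite ?orbT.
move=> z; rewrite !inE geq_min => /or3P[/eqP->|/eqP->|hz].
- by rewrite IH2 ?orbT // mem_head.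
- by rewrite leqnn.
- by rewrite IH2 ?orbT // inE hz orbT.
Qed.

Lemma omin_mem s z : z \in s -> exists y, omin s = Some y.
Proof. by case: s => // x s _; exists (foldr minn x s). Qed.

Fixpoint bits (M k : nat) : seq bool :=
  if M is M'.+1 then odd k :: bits M' k./2 else [::].

Lemma size_bits M k : size (bits M k) = M.
Proof. by elim: M k => //= M IH k; rewrite IH. Qed.

Lemma bits_inj M k1 k2 : k1 < 2 ^ M -> k2 < 2 ^ M -> bits M k1 = bits M k2 -> k1 = k2.
Proof.
elim: M k1 k2 => [|M IH] k1 k2 /=; first by rewrite expn0 !ltnS !leqn0 => /eqP-> /eqP->.
move=> h1 h2 [ho hh].
have half_lt k : k < 2 ^ M.+1 -> k./2 < 2 ^ M.
  by rewrite expnS => hk; move: (odd_double_half k); rewrite -mul2n; lia.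
by rewrite -(odd_double_half k1) -(odd_double_half k2) ho (IH _ _ (half_lt _ h1) (half_lt _ h2) hh).
Qed.

Section BinaryCode.
Variables (T : finType) (M : nat).

Definition encode (a : T) : seq bool := bits M (enum_rank a).
Definition decode (s : seq bool) : option T := [pick a | encode a == s].

Lemma size_encode a : size (encode a) = M.
Proof. exact: size_bits. Qed.

Lemma encodeK : #|T| <= 2 ^ M -> pcancel encode decode.
Proof.
move=> hT a; rewrite /decode; case: pickP => [b /eqP hb | none]; last first.
  by have := none a; rewrite eqxx.
congr Some; apply/enum_rank_inj/val_inj/(bits_inj _ _ hb); exact: leq_trans (ltn_ord _) hT.
Qed.

End BinaryCode.

Definition log2D D := trunc_log 2 D.
Definition ratio n D := n %/ D.
Definition nseeds n D := (n %/ D.+1).+1 * (2 * (log2D D).+1).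
Definition nlandmarks n D := nseeds n D + ratio n D.

(* Bits for the vertex, for the [2 nlandmarks] capped distances, and for the stored pairs. *)
Definition label_bits n D :=
  (ratio n D + (log2D D).+1) + 2 * (nlandmarks n D * (log2D D + 3))
  + ratio n D * (2 * log2D D + 6).

(* A label of [u] consists of [u], the capped distances from [u] to each landmark and from each
   landmark to [u], and at most [n / D] pairs [(v, j)], each recording [dist(u, v) = D + j]. *)
Notation label n D :=
  ('I_n * {ffun 'I_(nlandmarks n D) -> 'I_(2 * D).+2} * {ffun 'I_(nlandmarks n D) -> 'I_(2 * D).+2}
   * {A : {set 'I_n * 'I_D.+1} | #|A| <= ratio n D})%type.

Section Labels.
Variables n D : nat.
Implicit Type a b : label n D.

Definition lab_vertex a : 'I_n := a.1.1.1.
Definition lab_to a : 'I_(nlandmarks n D) -> 'I_(2 * D).+2 := a.1.1.2.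
Definition lab_from a : 'I_(nlandmarks n D) -> 'I_(2 * D).+2 := a.1.2.
Definition lab_pairs a : {set 'I_n * 'I_D.+1} := val a.2.

Definition candidates a b : seq nat :=
  [seq lab_to a i + lab_from b i | i <- enum 'I_(nlandmarks n D) &
     (lab_to a i <= 2 * D) && (lab_from b i <= 2 * D)] ++
  [seq D + val k | k <- enum 'I_D.+1 & (lab_vertex b, k) \in lab_pairs a].

Definition decode_label a b : option nat := omin (candidates a b).

End Labels.

Section Scheme.
Variables n D : nat.
Hypotheses (D_ge2 : 2 <= D) (D_lt_n : D < n).

Lemma n_gt0 : 0 < n. Proof. exact: leq_ltn_trans (leq0n _) D_lt_n. Qed.

Section Graph.
Variable G : rel 'I_n.
Local Notation cdist := (cdist G D).

Definition long_pairs : {set 'I_n * 'I_n} := [set p | D <= cdist p.1 p.2 <= 2 * D].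
Definition geodesics (p : 'I_n * 'I_n) : {set 'I_n} := geodesic_set G D p.1 p.2.

Lemma card_geodesics p : p \in long_pairs -> D.+1 <= #|geodesics p|.
Proof. by rewrite inE => /andP[h1 h2]; apply: leq_trans (card_geodesic_set h2). Qed.

Definition few_missed (S : seq 'I_n) : bool :=
  #|'I_n| ^ nseeds n D * #|missed geodesics long_pairs S|
    <= (#|'I_n| - D.+1) ^ nseeds n D * #|long_pairs|.

Definition seeds : seq 'I_n :=
  if [pick s : (nseeds n D).-tuple 'I_n | few_missed s] is Some s then val s else [::].

Lemma seedsP : size seeds = nseeds n D /\ few_missed seeds.
Proof.
rewrite /seeds; case: pickP => [s hs | none]; first by rewrite size_tuple.
have [s [hs hS]] := greedy_hitting_seq (Ordinal n_gt0) card_geodesics (nseeds n D).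
have /eqP hs' := hs; by have := none (Tuple hs'); rewrite /few_missed /= hS.
Qed.

Definition missed_pairs := missed geodesics long_pairs seeds.

(* Each of the [2 (log2 D + 1)] batches of [n %/ (D + 1) + 1] greedy steps halves the number
   of missed pairs, and [D^2 <= 2^(2 (log2 D + 1))]. *)
Lemma card_missed_pairs : D * D * #|missed_pairs| <= n * n.
Proof.
have hq : n <= (n %/ D.+1).+1 * D.+1 by apply/ltnW/ltn_ceil.
have hdec := expn_subn_decay (2 * (log2D D).+1) n_gt0 hq.
have hj : D * D <= 2 ^ (2 * (log2D D).+1).
  have h := trunc_log_ltn D (isT : 1 < 2).
  by rewrite mul2n -addnn expnD; apply: leq_mul; apply: ltnW.
have hA : #|long_pairs| <= n * n.
  by apply: leq_trans (max_card _) _; rewrite card_prod card_ord.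
have hp : 0 < n ^ nseeds n D by rewrite expn_gt0 n_gt0.
move: (proj2 seedsP); rewrite /few_missed card_ord -/missed_pairs => hS.
rewrite -(leq_pmul2l hp); move: hS hdec hj hA; rewrite -/(nseeds n D).
set a := n ^ _; set b := (n - D.+1) ^ _; set c := #|missed_pairs|; set e := #|long_pairs|.
move=> hS hdec hj hA.
have f1 := leq_mul (leqnn (D * D)) hS.
have f2 := leq_mul (leq_mul hj (leqnn b)) (leqnn e).
have f3 := leq_mul hdec (leqnn e).
have f4 := leq_mul (leqnn a) hA.
by nia.
Qed.

Definition missed_from (u : 'I_n) : {set 'I_n * 'I_D.+1} :=
  [set p : 'I_n * 'I_D.+1 | (cdist u p.1 == D + p.2) && ((u, p.1) \in missed_pairs)].

Definition heavy : {set 'I_n} := [set u | ratio n D < #|missed_from u|].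

Lemma card_missed_from u : #|missed_from u| <= #|[set p in missed_pairs | p.1 == u]|.
Proof.
have inj : {in missed_from u &, injective (fun p : 'I_n * 'I_D.+1 => (u, p.1))}.
  move=> [a1 a2] [b1 b2]; rewrite !inE /= => /andP[/eqP ha _] /andP[/eqP hb _] [e].
  by subst b1; congr (_, _); apply: val_inj; move: ha hb => -> /eqP; rewrite eqn_add2l => /eqP.
rewrite -(card_in_imset inj); apply: subset_leq_card; apply/subsetP => p /imsetP[q].
by rewrite !inE => /andP[_ h] ->; rewrite h eqxx.
Qed.

Lemma card_heavy : #|heavy| <= ratio n D.
Proof.
have hD0 : 0 < D by apply: leq_trans D_ge2.
have h1 : #|heavy| * (ratio n D).+1 <= #|missed_pairs|.
  have -> : #|missed_pairs| = \sum_u #|[set p in missed_pairs | p.1 == u]|.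
    rewrite -sum1_card (partition_big (fun p : 'I_n * 'I_n => p.1) predT) //=.
    by apply: eq_bigr => u _; rewrite -sum1_card; apply: eq_bigl => p; rewrite !inE.
  rewrite -sum_nat_const (big_mkcond (fun u => u \in heavy)) /=.
  apply: leq_sum => u _; case: ifP => // /[!inE] hu.
  exact: leq_trans hu (card_missed_from u).
have h3 : n < (ratio n D).+1 * D by apply: ltn_ceil.
rewrite /ratio leq_divRL //; move: h1 card_missed_pairs h3; rewrite -/(ratio n D).
set b := #|heavy|; set c := #|missed_pairs|; set x := ratio n D => h1 h2 h3.
have h4 : b * x.+1 * (D * D) <= n * n.
  by apply: leq_trans h2; rewrite mulnC leq_mul2l h1 orbT.
by nia.
Qed.

Definition landmarks : seq 'I_n := seeds ++ enum heavy.

Definition landmark (i : 'I_(nlandmarks n D)) : 'I_n := nth (Ordinal n_gt0) landmarks i.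

Lemma landmark_index s : s \in landmarks -> exists i, landmark i = s.
Proof.
move=> hs; have hi : index s landmarks < nlandmarks n D.
  apply: leq_trans (_ : size landmarks <= _); first by rewrite index_mem.
  by rewrite size_cat (proj1 seedsP) -cardE leq_add2l card_heavy.
by exists (Ordinal hi); rewrite /landmark /= nth_index.
Qed.

Definition stored_pairs (u : 'I_n) : {set 'I_n * 'I_D.+1} :=
  if #|missed_from u| <= ratio n D then missed_from u else set0.

Lemma card_stored_pairs u : #|stored_pairs u| <= ratio n D.
Proof. by rewrite /stored_pairs; case: ifP => // _; rewrite cards0. Qed.

Definition lab (u : 'I_n) : label n D :=
  (u, [ffun i => inord (cdist u (landmark i))], [ffun i => inord (cdist (landmark i) u)],
   exist (fun A : {set 'I_n * 'I_D.+1} => #|A| <= ratio n D) (stored_pairs u) (card_stored_pairs u)).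

Lemma inord_cdist (a b : 'I_n) : nat_of_ord (inord (cdist a b) : 'I_(2 * D).+2) = cdist a b.
Proof. by rewrite inordK // ltnS cdist_le. Qed.

Lemma candidate_walk u v c : c \in candidates (lab u) (lab v) -> walk G u v c.
Proof.
rewrite mem_cat => /orP[/mapP[i] | /mapP[k]].
  rewrite mem_filter /lab_to /lab_from /= !ffunE !inord_cdist => /andP[/andP[h1 h2] _] ->.
  exact: walk_cat (cdist_walk h1) (cdist_walk h2).
rewrite mem_filter /lab_pairs /lab_vertex /= /stored_pairs => /andP[].
case: ifP => _; last by rewrite inE.
rewrite inE /= => /andP[/eqP hc _] _ ->; rewrite -hc; apply: cdist_walk.
by rewrite hc mul2n -addnn leq_add2l; apply: ltnSE (ltn_ord k).
Qed.

Lemma landmark_candidate u v s : s \in landmarks -> cdist u s + cdist s v = cdist u v ->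
  cdist u v <= 2 * D -> cdist u v \in candidates (lab u) (lab v).
Proof.
move=> hs he hk; have [i hi] := landmark_index hs.
rewrite mem_cat; apply/orP; left; apply/mapP; exists i; last first.
  by rewrite /lab_to /lab_from /= !ffunE !inord_cdist hi.
rewrite mem_filter mem_enum andbT /lab_to /lab_from /= !ffunE !inord_cdist hi.
by apply/andP; split; apply: leq_trans hk; rewrite -he ?leq_addr ?leq_addl.
Qed.

(* A long pair is either hit by a seed, or starts at a heavy vertex (itself a landmark),
   or is stored in the label of its source. *)
Lemma long_pair_candidate u v : D <= cdist u v <= 2 * D ->
  cdist u v \in candidates (lab u) (lab v).
Proof.
move=> /andP[h1 h2]; have hA : (u, v) \in long_pairs by rewrite inE h1 h2.
case hU: ((u, v) \in missed_pairs); last first.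
  move: hU; rewrite /missed_pairs /missed inE hA /= => /negbT/existsP[s /andP[hs hS]].
  apply: (@landmark_candidate _ _ s) => //; first by rewrite /landmarks mem_cat; apply/orP; left.
  by apply/eqP; move: hs; rewrite /geodesics /geodesic_set /= inE.
case hY: (#|missed_from u| <= ratio n D); last first.
  apply: (@landmark_candidate _ _ u) => //; last by rewrite cdist_refl.
  by rewrite /landmarks mem_cat mem_enum inE ltnNge hY orbT.
rewrite mem_cat; apply/orP; right; apply/mapP.
have hk : cdist u v - D < D.+1 by rewrite ltnS leq_subLR; lia.
exists (Ordinal hk); last by rewrite /= subnKC.
rewrite mem_filter mem_enum andbT /lab_pairs /lab_vertex /= /stored_pairs hY inE /=.
by rewrite hU andbT subnKC.
Qed.

Lemma decode_lab_le u v : dist_le G u v (decode_label (lab u) (lab v)).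
Proof.
rewrite /dist_le; case hd: decode_label => [y|] //.
by have [hy _] := ominP hd; exists y; split => //; apply: candidate_walk.
Qed.

Lemma decode_lab_dist u v k : dist_is G u v k -> D <= k <= 2 * D ->
  decode_label (lab u) (lab v) = Some k.
Proof.
move=> hdist /andP[h1 h2]; have hcd := cdist_dist hdist h2.
have hc : k \in candidates (lab u) (lab v).
  by rewrite -hcd; apply: long_pair_candidate; rewrite hcd h1 h2.
have [y hy] := omin_mem hc; rewrite /decode_label hy; have [hy1 hy2] := ominP hy.
congr Some; apply/eqP; rewrite eqn_leq hy2 //= leqNgt; apply/negP => hlt.
exact: (proj2 hdist) _ hlt (candidate_walk hy1).
Qed.

End Graph.

Lemma log2D_gt0 : 0 < log2D D.
Proof. by rewrite /log2D trunc_log_gt0 D_ge2. Qed.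

Lemma ratio_gt0 : 0 < ratio n D.
Proof. by rewrite /ratio divn_gt0 ?(ltnW D_lt_n) //; apply: leq_trans D_ge2. Qed.

Lemma n_lt_ratio : n < (ratio n D).+1 * D.
Proof. by apply: ltn_ceil; apply: leq_trans D_ge2. Qed.

Lemma dist_range_le : (2 * D).+2 <= 2 ^ (log2D D + 3).
Proof.
have := trunc_log_ltn D (isT : 1 < 2); rewrite -/(log2D D).
by rewrite addnS addnS addn1 !expnS; lia.
Qed.

Lemma vertex_range_le : n <= 2 ^ (ratio n D + (log2D D).+1).
Proof.
rewrite expnD; apply/ltnW/(leq_trans n_lt_ratio)/leq_mul; first exact: ltn_expl.
exact/ltnW/trunc_log_ltn.
Qed.

Lemma card_pair_sets :
  \sum_(i < (ratio n D).+1) 'C(n * D.+1, i) <= 2 ^ (ratio n D * (2 * log2D D + 6)).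
Proof.
have hxD : D <= ratio n D * D by apply: leq_pmull ratio_gt0.
have hn2 : n * D.+1 <= ratio n D * (2 * D * D.+1).
  by rewrite mulnA leq_mul2r; have := n_lt_ratio; rewrite mulSn; lia.
apply: leq_trans (partial_binomial_le ratio_gt0 _ hn2) _.
  by apply: leq_trans (leq_div n D) (leq_pmulr _ _).
rewrite (mulnC (ratio n D)) expnM leq_expn2r //.
have := trunc_log_ltn D (isT : 1 < 2); rewrite -/(log2D D) => hD.
have : D * D.+1 <= 2 ^ (log2D D).+1 * 2 ^ (log2D D).+1 by apply: leq_mul; [apply: ltnW|].
have -> : 2 * log2D D + 6 = (log2D D).+1 + (log2D D).+1 + 4 by lia.
by rewrite !expnD (_ : 2 ^ 4 = 16) //; lia.
Qed.

Lemma card_label : #|{: label n D}| <= 2 ^ label_bits n D.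
Proof.
rewrite !card_prod !card_ffun !card_ord card_sig card_small_sets card_prod !card_ord.
rewrite /label_bits 2!expnD mulnA; apply: leq_mul card_pair_sets.
rewrite -mulnA; apply: leq_mul vertex_range_le _.
have -> : 2 ^ (2 * nlandmarks n D * (log2D D + 3))
    = (2 ^ (log2D D + 3)) ^ nlandmarks n D * (2 ^ (log2D D + 3)) ^ nlandmarks n D.
  by rewrite -!expnM -expnD; congr (_ ^ _); lia.
by apply: leq_mul; apply: leq_expn2r dist_range_le.
Qed.

Lemma label_bits_le : label_bits n D <= 100 * (ratio n D * (log2D D * log2D D)).
Proof.
have hx := ratio_gt0; have ht := log2D_gt0.
have hq : (n %/ D.+1).+1 <= (ratio n D).+1.
  by rewrite ltnS /ratio; apply: leq_div2l => //; apply: leq_trans D_ge2.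
rewrite /label_bits /nlandmarks /nseeds.
move: hx ht hq; set x := ratio n D; set t := log2D D; set q := (n %/ D.+1).+1 => hx ht hq.
have hK : (q * (2 * t.+1) + x) * (t + 3) <= (x.+1 * (2 * t.+1) + x) * (t + 3).
  by apply: leq_mul => //; rewrite leq_add2r leq_mul2r hq orbT.
have a1 : x * t <= x * (t * t) by rewrite leq_mul2l leq_pmulr ?orbT.
have a2 : t * t <= x * (t * t) by rewrite leq_pmull.
have a3 : t <= t * t by rewrite leq_pmull.
have a4 : x <= x * t by rewrite leq_pmulr.
by nia.
Qed.

Definition decoder (s1 s2 : seq bool) : option nat :=
  if (decode (label n D) (label_bits n D) s1, decode (label n D) (label_bits n D) s2)
    is (Some a, Some b) then decode_label a b else None.

Lemma lab_scheme :
  DD_preserving_scheme D (fun G u => encode (label_bits n D) (lab G u)) decoder.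
Proof.
move=> G; split=> [u v | u v k]; rewrite /decoder !(encodeK card_label).
  exact: decode_lab_le.
exact: decode_lab_dist.
Qed.

End Scheme.

Lemma few_vertices_scheme n D : n <= D ->
  DD_preserving_scheme D (fun (_ : rel 'I_n) _ => [::]) (fun _ _ => None).
Proof.
move=> hnD G; split=> // u v k [hw hmin] /andP[hk _]; have [k' hk' hw'] := walk_shorten hw.
by case: (hmin k' (leq_trans hk' (leq_trans hnD hk)) hw').
Qed.

Definition size_const : R := Rdiv (INR 100) (Rmult (ln (INR 2)) (ln (INR 2))).

Lemma ln2_gt0 : Rlt 0 (ln (INR 2)).
Proof. by rewrite -ln_1; apply: ln_increasing; rewrite /=; lra. Qed.

Lemma size_bound_ge0 n D : 0 < D ->
  Rle 0 (Rmult (Rmult size_const (Rdiv (INR n) (INR D))) (pow (ln (INR D)) 2)).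
Proof.
move=> hD; have hd : Rlt 0 (INR D) by apply/lt_0_INR/ltP.
have hl := ln2_gt0.
apply: Rmult_le_pos; last exact: pow2_ge_0.
apply: Rmult_le_pos; last by apply: Rmult_le_pos; [apply: pos_INR | apply/Rlt_le/Rinv_0_lt_compat].
apply: Rmult_le_pos; first exact: pos_INR.
exact/Rlt_le/Rinv_0_lt_compat/Rmult_lt_0_compat.
Qed.

Lemma INR_ratio_le n D : 0 < D -> Rle (INR (ratio n D)) (Rdiv (INR n) (INR D)).
Proof.
move=> hD; have hd : Rlt 0 (INR D) by apply/lt_0_INR/ltP.
have /leP/le_INR := leq_divM n D; rewrite mult_INR => h.
rewrite /Rdiv; apply: (Rmult_le_reg_r (INR D)) => //.
by rewrite Rmult_assoc Rinv_l ?Rmult_1_r //; apply: Rgt_not_eq.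
Qed.

Lemma INR_log2D_le D : 0 < D -> Rle (INR (log2D D)) (Rdiv (ln (INR D)) (ln (INR 2))).
Proof.
move=> hD; have hl := ln2_gt0; have h2 : Rlt 0 (INR 2) by rewrite /=; lra.
have /leP/le_INR := trunc_logP (isT : 1 < 2) hD; rewrite INR_expn => h.
have := ln_le (pow_lt _ (log2D D) h2) h; rewrite ln_pow // => h'.
rewrite /Rdiv; apply: (Rmult_le_reg_r (ln (INR 2))) => //.
by rewrite Rmult_assoc Rinv_l ?Rmult_1_r //; apply: Rgt_not_eq.
Qed.

Lemma label_bits_real_le n D : 2 <= D -> D < n ->
  Rle (INR (label_bits n D)) (Rmult (Rmult size_const (Rdiv (INR n) (INR D))) (pow (ln (INR D)) 2)).
Proof.
move=> hD2 hDn; have hD : 0 < D by apply: leq_trans hD2.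
have /leP/le_INR := label_bits_le hD2 hDn; rewrite !mult_INR => hM.
apply: Rle_trans hM _.
have hx := INR_ratio_le n hD; have ht := INR_log2D_le hD.
have hx0 := pos_INR (ratio n D); have ht0 := pos_INR (log2D D); have hl := ln2_gt0.
have -> : Rmult (Rmult size_const (Rdiv (INR n) (INR D))) (pow (ln (INR D)) 2) =
    Rmult (INR 100) (Rmult (Rdiv (INR n) (INR D))
      (Rmult (Rdiv (ln (INR D)) (ln (INR 2))) (Rdiv (ln (INR D)) (ln (INR 2))))).
  by rewrite /size_const /=; field; split; apply: Rgt_not_eq => //; apply/lt_0_INR/ltP.
apply: Rmult_le_compat_l; first exact: pos_INR.
by apply: Rmult_le_compat => //; [apply: Rmult_le_pos | apply: Rmult_le_compat].
Qed.

Theorem theorem5 :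
  exists C : R, forall n D : nat, 2 <= D ->
    exists (e : rel 'I_n -> 'I_n -> seq bool)
           (d : seq bool -> seq bool -> option nat),
      DD_preserving_scheme D e d /\
      (forall (G : rel 'I_n) (u : 'I_n),
         Rle (INR (size (e G u))) (Rmult (Rmult C (Rdiv (INR n) (INR D))) (pow (ln (INR D)) 2))).
Proof.
exists size_const => n D hD2.
have [hnD | hDn] := leqP n D.
  exists (fun _ _ => [::]), (fun _ _ => None); split; first exact: few_vertices_scheme.
  by move=> G u; apply: size_bound_ge0; apply: leq_trans hD2.
exists (fun G u => encode (label_bits n D) (lab hDn G u)), (decoder n D); split.
  exact: lab_scheme.
by move=> G u; rewrite size_encode; apply: label_bits_real_le.
Qed.
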